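(* Let $n$ be a positive integer and put $\overline n=2\operatorname{lcm}(1,2,\dots,n)$. Let $M_{\overline n}$ be the least positive integer $M$ such that the set $\pi_{\overline n,M}$ is infinite, and put $\pi_{\overline n}=\pi_{\overline n,M_{\overline n}}$. Let $r\in\pi_{\overline n}$, and let $G_{n,r}$ be constructed as follows: $R_{n,r}$ is an extraspecial group of order $r^{2n+1}$ and exponent $r$; $A_{n,r}\leqslant\operatorname{Aut}(R_{n,r})$ is a subgroup isomorphic to $Sp_{2n}(r)$ centralizing $Z(R_{n,r})$; $X_{n,r}=R_{n,r}A_{n,r}$ is the natural semidirect product; $p$ is a prime with $p\equiv1\pmod r$; $V_{n,r}$ is a faithful irreducible $\mathbb{F}_pX_{n,r}$-module of dimension $r^n$; and $G_{n,r}=V_{n,r}X_{n,r}$ is the natural semidirect product. Then the $c$-dimension of $G_{n,r}$ does not exceed $2\left((n+1)^2+nM_{\overline n}\right)$.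
   Context: For a positive integer $m$, $\Omega(m)$ is the number of prime divisors of $m$ counted with multiplicity. For positive integers $n,M$, $\pi_{n,M}=\{r\mid r\text{ is an odd prime and }\Omega(r^n-1)\leqslant M\}$; it is known that for each $n$ some $\pi_{n,M}$ is infinite, so $M_{\overline n}$ is well defined. The $c$-dimension of a group $G$ is the maximal length $k$ of a chain of nested centralizers $C_G(Y_0)<C_G(Y_1)<\dots<C_G(Y_k)$ (strict inclusions) of subsets $Y_i\subseteq G$. *)

From mathcomp Require Import all_boot all_order all_algebra all_fingroup all_solvable.
Set Implicit Arguments. Unset Strict Implicit. Unset Printing Implicit Defensive.
Import GRing.Theory.

Definition Omega (m : nat) : nat := \sum_(q <- primes m) logn q m.

Definition pi_set (N M : nat) : pred nat :=
  fun r => [&& odd r, prime r & Omega (r ^ N - 1) <= M].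

Definition infinite_pred (P : pred nat) : Prop :=
  forall b : nat, exists r, b < r /\ P r.

Definition nbar (n : nat) : nat := 2 * \big[lcmn/1]_(1 <= i < n.+1) i.

Definition is_M_bar (N M : nat) : Prop :=
  0 < M /\ infinite_pred (pi_set N M) /\
  (forall M', 0 < M' < M -> ~ infinite_pred (pi_set N M')).

(* standard alternating form J = [[0, I_n], [-I_n, 0]] over F_r,
   as a (2n) x (2n) matrix (size written (2*n).-1.+1 as required by 'GL). *)
Definition sympJ (n r : nat) : 'M['F_r]_((2 * n).-1.+1) :=
  \matrix_(i, j) (if (i < n) && (j == i + n :> nat) then 1%R
                  else if (n <= i) && (i == j + n :> nat) then (-1)%R else 0%R).

Definition Sp (n r : nat) : {set {'GL_(2 * n)['F_r]}} :=
  [set g : {'GL_(2 * n)['F_r]} |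
     ((GLval g) *m sympJ n r *m (GLval g)^T == sympJ n r)%R].

Local Open Scope group_scope.
Definition centralizer_chain (gT : finGroupType) (G : {set gT}) (k : nat)
  (Y : nat -> {set gT}) : Prop :=
  (forall i, i <= k -> Y i \subset G) /\
  (forall i, i < k -> 'C_G(Y i) \proper 'C_G(Y i.+1)).

Definition c_dim_le (gT : finGroupType) (G : {set gT}) (B : nat) : Prop :=
  forall k Y, @centralizer_chain gT G k Y -> k <= B.

(* Let V be an abelian normal subgroup of G. Along a chain of centralizers
   C_G(Y_0) < C_G(Y_1) < ..., the images in G/V of the centralizers C_i grow and
   those of the double centralizers C_G(C_i) shrink, and at every step one of
   them changes strictly: otherwise an element of C_(i+1) is an element of C_i
   times an element w of V, and w commutes with Y_i because every y in Y_i lies,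
   modulo the abelian V, in C_G(C_(i+1)). Measuring subgroups of G/V by the
   number Omega of prime factors of their orders, every chain has length at
   most 2 Omega|G/V|. For G = V X this is 2 (2n + 1 + Omega|Sp_2n(r)|).
   Counting symplectic bases one hyperbolic pair at a time gives
   |Sp_2n(r)| = prod_(k=1..n) (r^2k - 1) r^(2k-1); each r^2k - 1 divides
   r^nbar - 1, which has at most M prime factors, so Omega|Sp_2n(r)| <= n^2 + n M. *)

From mathcomp Require Import all_boot all_order all_algebra all_fingroup all_solvable.
From mathcomp Require Import zify.
Set Implicit Arguments. Unset Strict Implicit. Unset Printing Implicit Defensive.
Import GRing.Theory.

Lemma sum_logn_Omega (m : nat) (s : seq nat) :
  0 < m -> uniq s -> {subset primes m <= s} -> \sum_(q <- s) logn q m = Omega m.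
Proof.
move=> m_gt0 s_uniq sub_ms; rewrite /Omega (bigID (mem (primes m))) /=.
rewrite [X in _ + X]big1 ?addn0; last first.
  by move=> q /negbTE q_m; apply/eqP; rewrite -leqn0 leqNgt logn_gt0 q_m.
rewrite -big_filter; apply/perm_big/uniq_perm; rewrite ?filter_uniq ?primes_uniq //.
by move=> q; rewrite mem_filter andb_idr // => /sub_ms.
Qed.

Lemma Omega1 : Omega 1 = 0.
Proof. by rewrite /Omega big_nil. Qed.

Lemma OmegaM a b : 0 < a -> 0 < b -> Omega (a * b) = Omega a + Omega b.
Proof.
move=> a_gt0 b_gt0; have ab_gt0 : 0 < a * b by rewrite muln_gt0 a_gt0.
have sub_ab c : c %| a * b -> {subset primes c <= primes (a * b)}.
  by move=> c_ab q; rewrite !mem_primes ab_gt0 => /and3P[-> _ /dvdn_trans->].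
rewrite -(sum_logn_Omega a_gt0 (primes_uniq _) (sub_ab a (dvdn_mulr _ (dvdnn a)))).
rewrite -(sum_logn_Omega b_gt0 (primes_uniq _) (sub_ab b (dvdn_mull _ (dvdnn b)))).
by rewrite -big_split; apply: eq_bigr => q _; apply: lognM.
Qed.

Lemma dvdn_leq_Omega a b : 0 < b -> a %| b -> Omega a <= Omega b.
Proof.
move=> b_gt0 /dvdnP[c def_b]; move: b_gt0; rewrite def_b muln_gt0 => /andP[c_gt0 a_gt0].
by rewrite OmegaM ?leq_addl.
Qed.

Lemma Omega_pfactor q k : prime q -> Omega (q ^ k) = k.
Proof.
move=> q_pr; elim: k => [|k IHk]; first by rewrite expn0 Omega1.
rewrite expnS OmegaM ?expn_gt0 ?prime_gt0 // IHk /Omega primes_prime //.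
by rewrite big_seq1 logn_prime ?eqxx.
Qed.

Lemma Omega_gt0 a : 1 < a -> 0 < Omega a.
Proof.
move=> a_gt1; have [q q_pr q_a] := pdivP a_gt1.
have q_primes : q \in primes a by rewrite mem_primes q_pr q_a ltnW.
rewrite /Omega (bigD1_seq q) ?primes_uniq //=.
by rewrite (leq_trans _ (leq_addr _ _)) ?logn_gt0.
Qed.

Lemma Omega_prod (I : eqType) (s : seq I) (F : I -> nat) :
  (forall i, i \in s -> 0 < F i) -> Omega (\prod_(i <- s) F i) = \sum_(i <- s) Omega (F i).
Proof.
elim: s => [|i s IHs] F_gt0; first by rewrite !big_nil Omega1.
have F_s j : j \in s -> 0 < F j by move=> s_j; rewrite F_gt0 // inE s_j orbT.
rewrite !big_cons OmegaM ?IHs ?F_gt0 ?mem_head //.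
by rewrite big_seq prodn_cond_gt0.
Qed.

Lemma Omega_cardSg (gT : finGroupType) (H K : {group gT}) :
  H \subset K -> Omega #|H| <= Omega #|K|.
Proof. by move=> sHK; rewrite dvdn_leq_Omega ?cardG_gt0 ?cardSg. Qed.

Lemma Omega_card_proper (gT : finGroupType) (H K : {group gT}) :
  H \proper K -> Omega #|H| < Omega #|K|.
Proof.
move=> ltHK; have sHK := proper_sub ltHK.
rewrite -(Lagrange sHK) OmegaM ?cardG_gt0 // -addn1 leq_add2l Omega_gt0 //.
by rewrite indexg_gt1 (proper_subn ltHK).
Qed.

Section CentralizerChains.
Local Open Scope group_scope.
Variables (gT : finGroupType) (G V : {group gT}).
Hypotheses (nsVG : V <| G) (abV : abelian V).

Lemma cent_eq_mod_abelian (Y Z : {set gT}) :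
    Y \subset G -> 'C_G(Y) \subset 'C_G(Z) ->
    'C_G(Z) / V \subset 'C_G(Y) / V ->
    'C_G('C_G(Y)) / V \subset 'C_G('C_G(Z)) / V ->
  'C_G(Y) = 'C_G(Z).
Proof.
move=> sYG sCYZ sCZY sDYZ; have [sVG nVG] := andP nsVG.
have nVC (A : {set gT}) : 'C_G(A) \subset 'N(V) := subset_trans (subsetIl _ _) nVG.
apply/eqP; rewrite eqEsubset sCYZ /=; apply/subsetP => c cCZ.
move: sCZY; rewrite quotientSK // => /subsetP/(_ c cCZ)/mulsgP[w d wV dCY def_c].
rewrite def_c in cCZ *.
rewrite groupM // inE (subsetP sVG w wV) /=.
have wCZ : w \in 'C_G(Z) by rewrite -(mulgK d w) groupM ?groupV // (subsetP sCYZ).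
apply/centP => y yY; have yDY : y \in 'C_G('C_G(Y)).
  by rewrite inE (subsetP sYG) //=; apply/centP => x /setIP[_ /centP/(_ y yY)].
move: sDYZ; rewrite quotientSK // => /subsetP/(_ y yDY)/mulsgP[u e uV eDZ ->].
apply: commuteM; first exact: (centsP abV).
by move: eDZ => /setIP[_ /centP/(_ w wCZ)].
Qed.

Lemma c_dim_le_abelian_normal : c_dim_le G (2 * Omega #|G / V|).
Proof.
move=> k Y [sYG ltC].
pose C i := 'C_G(Y i)%G; pose D i := 'C_G(C i)%G.
pose a i := Omega #|(C i / V)%G|; pose b i := Omega #|(D i / V)%G|.
have step i : (i < k)%N -> (a i + b i.+1 < a i.+1 + b i)%N.
  move=> ik; have sC : C i \subset C i.+1 := proper_sub (ltC i ik).
  have sD : D i.+1 \subset D i by apply/setIS/centS.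
  have le_a : (a i <= a i.+1)%N := Omega_cardSg (quotientS V sC).
  have le_b : (b i.+1 <= b i)%N := Omega_cardSg (quotientS V sD).
  have [eC|ltCV] := eqVproper (quotientS V sC); last first.
    by rewrite -addSn leq_add ?Omega_card_proper.
  have [eD|ltDV] := eqVproper (quotientS V sD); last first.
    by rewrite -addnS leq_add ?Omega_card_proper.
  have eCY : C i = C i.+1 :> {set gT}.
    apply: cent_eq_mod_abelian; [exact/sYG/ltnW | exact: sC | |].
      by rewrite eC.
    by rewrite eD.
  by have := ltC i ik; rewrite eCY properxx.
have telescope i : (i <= k)%N -> (a 0 + b i + i <= a i + b 0)%N.
  elim: i => [|i IHi] ik; first by rewrite !addn0.
  by have := step i ik; have := IHi (ltnW ik); lia.
have le_aG i : (a i <= Omega #|G / V|)%N := Omega_cardSg (quotientS V (subsetIl G _)).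
have le_bG i : (b i <= Omega #|G / V|)%N := Omega_cardSg (quotientS V (subsetIl G _)).
by have := telescope k (leqnn k); have := le_aG k; have := le_bG 0; lia.
Qed.

End CentralizerChains.

Lemma card_dep_setX (T U : finType) (X : {set T}) (Y : T -> {set U}) :
  #|[set q : T * U | (q.1 \in X) && (q.2 \in Y q.1)]| = (\sum_(x in X) #|Y x|)%N.
Proof.
rewrite -sum1_card (partition_big fst (mem X)) => [|q]; last by rewrite inE => /andP[].
apply: eq_bigr => x xX; have inj_pair : injective (pair x : U -> T * U) by move=> u v [].
rewrite -(card_imset _ inj_pair) -sum1_card; apply: eq_bigl => -[x' u] /=.
rewrite inE /=; apply/andP/imsetP => [[/andP[_ uY] /eqP/= eq_x] | [v vY [-> ->]]].
  by subst x'; exists u.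
by split => //; rewrite vY andbT.
Qed.

Section Symplectic.
Local Open Scope ring_scope.
Variables n r : nat.
Hypotheses (n_gt0 : (0 < n)%N) (r_pr : prime r) (r_odd : odd r).
Local Notation m := (2 * n).-1.+1.
Local Notation J := (sympJ n r).
Local Notation vec := 'rV['F_r]_m.
Local Notation mat := 'M['F_r]_m.

Definition sform (x y : vec) : 'F_r := (x *m J *m y^T) 0 0.

Lemma sympJ_skew a b : J b a = - J a b.
Proof.
rewrite !mxE; have := ltn_ord a; have := ltn_ord b.
by case: (ltnP a n); case: (ltnP b n); case: (eqVneq (a : nat) (b + n)%N);
  case: (eqVneq (b : nat) (a + n)%N) => /=; rewrite ?opprK ?oppr0 //; lia.
Qed.

Lemma sympJ_diag a : J a a = 0.
Proof.
by rewrite mxE; case: ifP => [/andP[_ /eqP] | _]; [lia | case: ifP => [/andP[_ /eqP] | //]; lia].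
Qed.

Lemma tr_sympJ : J^T = - J.
Proof. by apply/matrixP => a b; rewrite [LHS]mxE [RHS]mxE sympJ_skew. Qed.

Lemma sform_skew x y : sform y x = - sform x y.
Proof.
rewrite /sform; have -> : y *m J *m x^T = (x *m J^T *m y^T)^T.
  by rewrite !trmx_mul !trmxK mulmxA.
by rewrite mxE tr_sympJ mulmxN mulNmx mxE.
Qed.

Lemma sformDZr x c y z : sform x (c *: y + z) = c * sform x y + sform x z.
Proof.
rewrite /sform; have -> : (c *: y + z)^T = c *: y^T + z^T.
  by apply/matrixP => i k; rewrite !mxE.
by rewrite mulmxDr -scalemxAr !mxE.
Qed.

Lemma sform0r x : sform x 0 = 0.
Proof. by rewrite /sform trmx0 mulmx0 mxE. Qed.

Lemma sformZr x c y : sform x (c *: y) = c * sform x y.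
Proof. by rewrite -[c *: y]addr0 sformDZr sform0r addr0. Qed.

Lemma sformNr x y : sform x (- y) = - sform x y.
Proof. by rewrite -scaleN1r sformZr mulN1r. Qed.

Lemma sform_alt x : sform x x = 0.
Proof.
have two_neq0 : (2%:R : 'F_r) != 0.
  rewrite -(dvdn_pcharf (pchar_Fp r_pr)); apply: contraL r_odd => /(dvdn_leq (isT : (0 < 2)%N)).
  by have := prime_gt1 r_pr; case: r => [|[|[|]]].
have : sform x x *+ 2 = 0 by rewrite mulr2n {1}sform_skew addNr.
by rewrite -mulr_natr => /eqP; rewrite mulf_eq0 (negbTE two_neq0) orbF => /eqP.
Qed.

Lemma sform_nondeg x : x != 0 -> exists y, sform x y != 0.
Proof.
move=> nz_x; have [i x_i] : exists i, x 0 i != 0.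
  apply/existsP; apply: contraR nz_x => /existsPn x0.
  by apply/eqP/rowP => i; rewrite mxE; apply/eqP/negPn/x0.
have [c nz_Jic Jac] : exists2 c, J i c != 0 & forall a, a != i -> J a c = 0.
  have lt_i := ltn_ord i.
  have [lt_in | le_ni] := ltnP i n.
    have lt_c : (i + n < m)%N by lia.
    exists (Ordinal lt_c) => [|a /eqP ne_ai]; rewrite mxE /=.
      by rewrite lt_in eqxx oner_neq0.
    have ne_ai' : (a : nat) <> i by move=> /val_inj.
    have lt_a := ltn_ord a.
    by case: ifP => [/andP[_ /eqP] | _]; [lia | case: ifP => [/andP[_ /eqP]|//]; lia].
  have lt_c : (i - n < m)%N by lia.
  exists (Ordinal lt_c) => [|a /eqP ne_ai]; rewrite mxE /=.
    rewrite ltnNge le_ni /= subnK // eqxx /=.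
    by rewrite oppr_eq0 oner_neq0.
  have ne_ai' : (a : nat) <> i by move=> /val_inj.
  have lt_a := ltn_ord a.
  by case: ifP => [/andP[_ /eqP] | _]; [lia | case: ifP => [/andP[_ /eqP]|//]; lia].
exists (delta_mx 0 c); rewrite /sform trmx_delta -colE !mxE (bigD1 i) //= big1 ?addr0.
  by rewrite mulf_neq0.
by move=> a ne_ai; rewrite Jac // mulr0.
Qed.

Lemma card_sform_level (S : {set vec}) e s t :
    linear_closed S -> s \in S -> sform e s = 1 ->
  #|[set x in S | sform e x == t]| = #|[set x in S | sform e x == 0]|.
Proof.
move=> linS sS es1.
have -> : [set x in S | sform e x == t] = [set t *: s + x | x in [set x in S | sform e x == 0]].
  apply/setP => x; rewrite inE; apply/andP/imsetP => [[xS /eqP ext] | [y]].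
    exists ((- t) *: s + x); last by rewrite addrA -scalerDl subrr scale0r add0r.
    by rewrite inE linS //= sformDZr es1 ext mulr1 addNr.
  by rewrite inE => /andP[yS /eqP ey] ->; rewrite linS // sformDZr ey es1 mulr1 addr0.
by apply: card_imset; apply: addrI.
Qed.

Lemma card_sform_ker (S : {set vec}) e s :
    linear_closed S -> s \in S -> sform e s = 1 ->
  #|S| = (r * #|[set x in S | sform e x == 0%R]|)%N.
Proof.
move=> linS sS es1; rewrite -sum1_card (partition_big (sform e) predT) //=.
rewrite (eq_bigr (fun _ => #|[set x in S | sform e x == 0]|)).
  by rewrite sum_nat_const card_Fp.
move=> t _; rewrite -(card_sform_level t linS sS es1) -sum1_card.
by apply: eq_bigl => x; rewrite inE.
Qed.

Lemma linear_closed_sform_ker (S : {set vec}) e :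
  linear_closed S -> linear_closed [set x in S | sform e x == 0].
Proof.
move=> linS c x y; rewrite !inE => /andP[xS /eqP ex] /andP[yS /eqP ey].
by rewrite linS //= sformDZr ex ey mulr0 addr0.
Qed.

(* Rows [i] and [i + n] of a matrix hold the [i]-th hyperbolic pair (e_i, f_i)
   for [sympJ]; [in_pairs j a] says that row [a] belongs to one of the first [j]
   pairs. *)
Definition in_pairs j (a : 'I_m) : bool := (a < j)%N || (n <= a < n + j)%N.

Definition partial_sbasis j (A : mat) : bool :=
  [forall a, forall b,
     in_pairs j a && in_pairs j b ==> (sform (row a A) (row b A) == J a b)].

Definition sperp j (A : mat) : {set vec} :=
  [set x | [forall a, in_pairs j a ==> (sform (row a A) x == 0)]].

Definition hyp_pairs (S : {set vec}) : {set vec * vec} :=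
  [set p | [&& p.1 \in S, p.2 \in S & sform p.1 p.2 == 1]].

(* The other rows are zero, so these matrices correspond one-to-one to the
   partial symplectic bases (e_0, f_0, ..., e_(j-1), f_(j-1)). *)
Definition partial_sbases j : {set mat} :=
  [set A | partial_sbasis j A && [forall a, ~~ in_pairs j a ==> (row a A == 0)]].

Lemma partial_sbasisP j A :
  reflect (forall a b, in_pairs j a -> in_pairs j b -> sform (row a A) (row b A) = J a b)
          (partial_sbasis j A).
Proof.
apply: (iffP forallP) => [sbA a b ja jb | sbA a].
  by have /forallP/(_ b) := sbA a; rewrite ja jb => /eqP.
by apply/forallP => b; apply/implyP => /andP[ja jb]; rewrite sbA.
Qed.

Lemma sperpP j A x :
  reflect (forall a, in_pairs j a -> sform (row a A) x = 0) (x \in sperp j A).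
Proof.
rewrite inE; apply: (iffP forallP) => [xA a ja | xA a].
  by have := xA a; rewrite ja => /eqP.
by apply/implyP => ja; rewrite xA.
Qed.

Lemma linear_closed_sperp j A : linear_closed (sperp j A).
Proof.
move=> c x y /sperpP xA /sperpP yA; apply/sperpP => a ja.
by rewrite sformDZr xA ?yA ?mulr0 ?addr0.
Qed.

Lemma mem0_sperp j A : 0 \in sperp j A.
Proof. by apply/sperpP => a _; rewrite sform0r. Qed.

Lemma in_pairs0 a : in_pairs 0 a = false.
Proof. by rewrite /in_pairs ltn0 addn0; case: leqP. Qed.

Lemma in_pairs_n a : in_pairs n a.
Proof. by rewrite /in_pairs; have := ltn_ord a; case: ltnP => //=; lia. Qed.

Lemma sperp0 A : sperp 0 A = setT.
Proof. by apply/setP => x; rewrite in_setT; apply/sperpP => a; rewrite in_pairs0. Qed.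

Definition ej j : 'I_m := inord j.
Definition fj j : 'I_m := inord (j + n).

Section NextPair.
Variable j : nat.
Hypothesis lt_jn : (j < n)%N.

Lemma ejE : ej j = j :> nat.
Proof. by rewrite inordK //; lia. Qed.

Lemma fjE : fj j = (j + n)%N :> nat.
Proof. by rewrite inordK //; lia. Qed.

Lemma in_pairsS a : in_pairs j.+1 a = [|| in_pairs j a, a == ej j | a == fj j].
Proof.
rewrite /in_pairs -!val_eqE /= ejE fjE; have := ltn_ord a.
by case: (ltnP a j); case: (ltnP a n); case: eqVneq; case: eqVneq => /=; lia.
Qed.

Lemma in_pairs_ej : in_pairs j (ej j) = false.
Proof. by rewrite /in_pairs ejE ltnn /=; apply/negbTE/negP => /andP[]; lia. Qed.

Lemma in_pairs_fj : in_pairs j (fj j) = false.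
Proof. by rewrite /in_pairs fjE; apply/negbTE/negP => /orP[|/andP[]]; lia. Qed.

Lemma ej_neq_fj : (ej j == fj j) = false.
Proof. by apply/negbTE; rewrite -val_eqE /= ejE fjE; apply/eqP; lia. Qed.

Lemma sympJ_ef : J (ej j) (fj j) = 1.
Proof. by rewrite mxE ejE fjE lt_jn eqxx. Qed.

Lemma sympJ_pairs a : in_pairs j a ->
  [/\ J a (ej j) = 0, J (ej j) a = 0, J a (fj j) = 0 & J (fj j) a = 0].
Proof.
rewrite /in_pairs => ja; have := ltn_ord a.
by split; rewrite mxE ?ejE ?fjE; case: ifP => [/andP[/= ? /eqP ?] | _]; try lia;
  case: ifP => [/andP[/= ? /eqP ?] | //]; lia.
Qed.

Lemma partial_sbasisS A : partial_sbasis j.+1 A =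
  [&& partial_sbasis j A, row (ej j) A \in sperp j A, row (fj j) A \in sperp j A
    & sform (row (ej j) A) (row (fj j) A) == 1].
Proof.
have pS a : in_pairs j a -> in_pairs j.+1 a by rewrite in_pairsS => ->.
have pSe : in_pairs j.+1 (ej j) by rewrite in_pairsS eqxx orbT.
have pSf : in_pairs j.+1 (fj j) by rewrite in_pairsS eqxx !orbT.
apply/partial_sbasisP/and4P => [sbA | [/partial_sbasisP sbA /sperpP eA /sperpP fA /eqP ef]].
  split; first by apply/partial_sbasisP => a b ja jb; apply: sbA; apply: pS.
  - by apply/sperpP => a ja; rewrite (sbA a (ej j) (pS a ja) pSe); case: (sympJ_pairs ja).
  - by apply/sperpP => a ja; rewrite (sbA a (fj j) (pS a ja) pSf); case: (sympJ_pairs ja).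
  by rewrite sbA ?sympJ_ef.
have fe : sform (row (fj j) A) (row (ej j) A) = J (fj j) (ej j).
  by rewrite sform_skew ef sympJ_skew sympJ_ef.
move=> a b; rewrite !in_pairsS => /or3P[ja|/eqP->|/eqP->] /or3P[jb|/eqP->|/eqP->].
- exact: sbA.
- by rewrite eA //; case: (sympJ_pairs ja).
- by rewrite fA //; case: (sympJ_pairs ja).
- by rewrite sform_skew eA // oppr0; case: (sympJ_pairs jb).
- by rewrite sform_alt sympJ_diag.
- by rewrite ef sympJ_ef.
- by rewrite sform_skew fA // oppr0; case: (sympJ_pairs jb).
- exact: fe.
- by rewrite sform_alt sympJ_diag.
Qed.

Lemma mem_sperpS A x : (x \in sperp j.+1 A) =
  [&& x \in sperp j A, sform (row (fj j) A) x == 0 & sform (row (ej j) A) x == 0].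
Proof.
apply/sperpP/and3P => [xA | [/sperpP xA fx ex] a].
  by split; [apply/sperpP => a ja | |]; [|apply/eqP..]; apply: xA;
    rewrite in_pairsS ?ja ?eqxx ?orbT.
by rewrite in_pairsS => /or3P[ja | /eqP-> | /eqP->]; [apply: xA | apply/eqP | apply/eqP].
Qed.

Lemma sperpS A : sperp j.+1 A =
  [set x in [set x in sperp j A | sform (row (fj j) A) x == 0] | sform (row (ej j) A) x == 0].
Proof. by apply/setP => x; rewrite mem_sperpS [in RHS]inE [in RHS]inE -andbA. Qed.

End NextPair.

Lemma card_sperp j A : (j <= n)%N -> partial_sbasis j A ->
  #|sperp j A| = (r ^ (2 * (n - j)))%N.
Proof.
elim: j => [|j IHj] le_jn sbA.
  by rewrite sperp0 cardsT card_mx card_Fp // mul1n subn0 prednK ?muln_gt0.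
have lt_jn : (j < n)%N by lia.
move: (sbA); rewrite partial_sbasisS // => /and4P[sbA' eA fA /eqP ef].
set e := row (ej j) A in eA ef; set f := row (fj j) A in fA ef.
have meA : - e \in sperp j A.
  by rewrite -scaleN1r -[_ *: e]addr0 linear_closed_sperp ?mem0_sperp.
have fme : sform f (- e) = 1 by rewrite sformNr sform_skew ef opprK.
have fK : f \in [set x in sperp j A | sform f x == 0] by rewrite inE fA sform_alt eqxx.
have := IHj (ltnW lt_jn) sbA'.
rewrite (card_sform_ker (@linear_closed_sperp j A) meA fme).
rewrite (card_sform_ker (linear_closed_sform_ker (e := f) (@linear_closed_sperp j A)) fK ef).
rewrite -sperpS // -/e -/f.
have -> : (2 * (n - j) = (2 * (n - j.+1)).+2)%N by lia.
by rewrite !expnS => /eqP; rewrite !eqn_pmul2l ?prime_gt0 // => /eqP.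
Qed.

Lemma sperp_proj j A y : (j <= n)%N -> partial_sbasis j A ->
  exists2 u, u \in sperp j A & forall z, z \in sperp j A -> sform z u = sform z y.
Proof.
elim: j => [|j IHj] le_jn sbA; first by exists y; rewrite ?sperp0 ?inE.
have lt_jn : (j < n)%N by lia.
move: (sbA); rewrite partial_sbasisS // => /and4P[sbA' eA fA /eqP ef].
set e := row (ej j) A in eA ef; set f := row (fj j) A in fA ef.
have fe : sform f e = -1 by rewrite sform_skew ef.
have [u uA yu] := IHj (ltnW lt_jn) sbA'.
have linA := @linear_closed_sperp j A.
exists (sform f u *: e + (- sform e u *: f + u)).
  rewrite mem_sperpS // -/e -/f linA ?linA //= !sformDZr fe ef !sform_alt.
  by rewrite !mulr0 !add0r mulrN1 mulr1 !addNr eqxx.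
move=> z; rewrite mem_sperpS // -/e -/f => /and3P[zA /eqP fz /eqP ez].
by rewrite !sformDZr (sform_skew e) ez (sform_skew f) fz oppr0 !mulr0 !add0r yu.
Qed.

Lemma sperp_nondeg j A e : (j <= n)%N -> partial_sbasis j A ->
  e \in sperp j A -> e != 0 -> exists2 s, s \in sperp j A & sform e s = 1.
Proof.
move=> le_jn sbA eA nz_e; have [y nz_ey] := sform_nondeg nz_e.
have [u uA yu] := sperp_proj y le_jn sbA.
exists ((sform e y)^-1 *: u + 0); first by rewrite linear_closed_sperp ?mem0_sperp.
by rewrite addr0 sformZr yu ?mulVf.
Qed.

Lemma card_hyp_pairs (S : {set vec}) d :
    linear_closed S -> 0 \in S -> #|S| = (r ^ d.+1)%N ->
    (forall e, e \in S -> e != 0 -> exists2 s, s \in S & sform e s = 1) ->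
  #|hyp_pairs S| = ((r ^ d.+1 - 1) * r ^ d)%N.
Proof.
move=> linS S0 cardS nondegS.
pose ones e := [set f in S | sform e f == 1].
have card_ones e : e \in S -> #|ones e| = if e == 0 then 0%N else (r ^ d)%N.
  move=> eS; case: eqP => [-> | /eqP nz_e].
    by apply/eqP; rewrite cards_eq0; apply/eqP/setP => f; rewrite !inE sform_skew sform0r
      oppr0 eq_sym oner_eq0 andbF.
  have [s sS es1] := nondegS e eS nz_e.
  have /eqP := card_sform_ker linS sS es1; rewrite cardS expnS eqn_pmul2l ?prime_gt0 //.
  by rewrite /ones (card_sform_level 1 linS sS es1) => /eqP.
have -> : hyp_pairs S = [set q | (q.1 \in S) && (q.2 \in ones q.1)].
  by apply/setP => -[e f]; rewrite !inE andbA.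
rewrite card_dep_setX (big_setD1 0) //= card_ones // eqxx add0n.
rewrite (eq_bigr (fun _ => r ^ d))%N => [|e]; last first.
  by rewrite in_setD1 => /andP[/negbTE nz_e eS]; rewrite card_ones // nz_e.
by rewrite sum_nat_const -cardS (cardsD1 0 S) S0 add1n subn1.
Qed.

Definition set_pair j (B : mat) (e f : vec) : mat :=
  \matrix_(i, k) (if i == ej j then e 0 k else if i == fj j then f 0 k else B i k).

Definition clear_pair j (A : mat) : mat :=
  \matrix_(i, k) (if (i == ej j) || (i == fj j) then 0 else A i k).

Lemma row_set_pair j B e f a : row a (set_pair j B e f) =
  if a == ej j then e else if a == fj j then f else row a B.
Proof. by apply/rowP => k; rewrite !mxE; do 2?case: ifP => _; rewrite ?mxE // ord1. Qed.

Lemma row_clear_pair j A a :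
  row a (clear_pair j A) = if (a == ej j) || (a == fj j) then 0 else row a A.
Proof. by apply/rowP => k; rewrite !mxE; case: ifP; rewrite ?mxE. Qed.

Lemma partial_sbasis_rows j A B :
  (forall a, in_pairs j a -> row a A = row a B) -> partial_sbasis j A = partial_sbasis j B.
Proof.
move=> eqAB; apply/partial_sbasisP/partial_sbasisP => sb a b ja jb.
  by rewrite -!eqAB ?sb.
by rewrite !eqAB ?sb.
Qed.

Lemma sperp_rows j A B :
  (forall a, in_pairs j a -> row a A = row a B) -> sperp j A = sperp j B.
Proof.
move=> eqAB; apply/setP => x; apply/sperpP/sperpP => xA a ja.
  by rewrite -eqAB ?xA.
by rewrite eqAB ?xA.
Qed.

Section PairExtension.
Variable j : nat.
Hypothesis lt_jn : (j < n)%N.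

Lemma in_pairs_neq a : in_pairs j a -> (a == ej j) = false /\ (a == fj j) = false.
Proof.
by move=> ja; split; apply/negbTE; apply: contraTN ja => /eqP->;
  rewrite ?in_pairs_ej ?in_pairs_fj.
Qed.

Lemma row_set_pair_in_pairs B e f a : in_pairs j a -> row a (set_pair j B e f) = row a B.
Proof. by move=> ja; rewrite row_set_pair; case: (in_pairs_neq ja) => -> ->. Qed.

Lemma row_clear_pair_in_pairs A a : in_pairs j a -> row a (clear_pair j A) = row a A.
Proof. by move=> ja; rewrite row_clear_pair; case: (in_pairs_neq ja) => -> ->. Qed.

Lemma set_pair_partial_sbases B e f :
    B \in partial_sbases j -> (e, f) \in hyp_pairs (sperp j B) ->
  set_pair j B e f \in partial_sbases j.+1.
Proof.
rewrite [B \in _]inE [_ \in hyp_pairs _]inE /= => /andP[sbB /forallP B0] /and3P[eB fB ef].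
have eq_rows := row_set_pair_in_pairs B e f.
rewrite inE (partial_sbasisS lt_jn) (partial_sbasis_rows eq_rows) (sperp_rows eq_rows).
rewrite !row_set_pair !eqxx [fj j == _]eq_sym (ej_neq_fj lt_jn) sbB eB fB ef /=.
apply/forallP => a; apply/implyP; rewrite in_pairsS // row_set_pair.
by case/norP=> ja /norP[/negbTE-> /negbTE->]; apply: (implyP (B0 a)).
Qed.

Lemma clear_pair_partial_sbases A : A \in partial_sbases j.+1 ->
  clear_pair j A \in partial_sbases j /\
  (row (ej j) A, row (fj j) A) \in hyp_pairs (sperp j (clear_pair j A)).
Proof.
rewrite inE (partial_sbasisS lt_jn) => /andP[/and4P[sbA eA fA ef] /forallP A0].
have eq_rows := row_clear_pair_in_pairs A.
rewrite [_ \in partial_sbases j]inE [_ \in hyp_pairs _]inE /=.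
rewrite (partial_sbasis_rows eq_rows) (sperp_rows eq_rows) sbA eA fA ef.
split=> //; apply/forallP => a; apply/implyP => ja; rewrite row_clear_pair.
case: ifP => // /norP[ae af]; apply: (implyP (A0 a)).
by rewrite in_pairsS // negb_or ja negb_or ae af.
Qed.

Lemma set_clear_pair A : set_pair j (clear_pair j A) (row (ej j) A) (row (fj j) A) = A.
Proof.
apply/row_matrixP => a; rewrite row_set_pair row_clear_pair.
by case: eqVneq => [->|_] //; case: eqVneq => [->|].
Qed.

Lemma clear_set_pair B e f : B \in partial_sbases j -> clear_pair j (set_pair j B e f) = B.
Proof.
rewrite inE => /andP[_ /forallP B0]; apply/row_matrixP => a.
rewrite row_clear_pair row_set_pair; case: ifP => [/orP[] /eqP-> | /norP[/negbTE-> /negbTE->]] //.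
  by rewrite (eqP (implyP (B0 _) _)) ?in_pairs_ej.
by rewrite (eqP (implyP (B0 _) _)) ?in_pairs_fj.
Qed.

Lemma card_partial_sbasesS : #|partial_sbases j.+1| =
  (#|partial_sbases j| * ((r ^ (2 * (n - j)) - 1) * r ^ (2 * (n - j)).-1))%N.
Proof.
pose P := [set q : mat * (vec * vec) |
             (q.1 \in partial_sbases j) && (q.2 \in hyp_pairs (sperp j q.1))].
have -> : partial_sbases j.+1 = [set set_pair j q.1 q.2.1 q.2.2 | q in P].
  apply/setP => A; apply/idP/imsetP => [sbA | [[B [e f]]]].
    have [sbA' ef] := clear_pair_partial_sbases sbA.
    exists (clear_pair j A, (row (ej j) A, row (fj j) A)); last by rewrite set_clear_pair.
    by rewrite inE /= sbA'.
  by rewrite inE /= => /andP[sbB ef] ->; apply: set_pair_partial_sbases.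
rewrite card_in_imset => [|[B [e f]] [B' [e' f']]]; last first.
  rewrite inE /= => /andP[sbB _]; rewrite inE /= => /andP[sbB' _] eqBB'.
  have := congr1 (row (ej j)) eqBB'; have := congr1 (row (fj j)) eqBB'.
  rewrite !row_set_pair !eqxx [fj j == _]eq_sym (ej_neq_fj lt_jn) => -> ->.
  by rewrite -(clear_set_pair e f sbB) eqBB' clear_set_pair.
rewrite /P (card_dep_setX _ (fun B => hyp_pairs (sperp j B))) -sum_nat_const.
apply: eq_bigr => B; rewrite inE => /andP[sbB _].
have le_jn := ltnW lt_jn; have d_gt0 : (2 * (n - j) = (2 * (n - j)).-1.+1)%N by lia.
rewrite {1}d_gt0; apply: card_hyp_pairs; rewrite ?mem0_sperp -?d_gt0 ?card_sperp //.
  exact: linear_closed_sperp.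
by move=> e; apply: sperp_nondeg.
Qed.

End PairExtension.

Lemma card_partial_sbases j : (j <= n)%N -> #|partial_sbases j| =
  (\prod_(i < j) ((r ^ (2 * (n - i)) - 1) * r ^ (2 * (n - i)).-1))%N.
Proof.
elim: j => [|j IHj] le_jn; last by rewrite big_ord_recr card_partial_sbasesS // IHj // ltnW.
rewrite big_ord0; suff -> : partial_sbases 0 = [set 0] by rewrite cards1.
apply/setP => A.
rewrite !inE; apply/andP/eqP => [[_ /forallP A0] | ->].
  by apply/row_matrixP => a; rewrite row0; apply/eqP/(implyP (A0 a)); rewrite in_pairs0.
by split; [apply/partial_sbasisP => a | apply/forallP => a]; rewrite ?in_pairs0 ?row0 ?eqxx.
Qed.

Lemma sform_gram (A : mat) (a b : 'I_m) : (A *m J *m A^T) a b = sform (row a A) (row b A).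
Proof. by rewrite /sform -!row_mul !mxE; apply: eq_bigr => k _; rewrite !mxE. Qed.

Lemma partial_sbases_n : partial_sbases n = [set A | A *m J *m A^T == J].
Proof.
apply/setP => A; rewrite !inE; apply/andP/eqP => [[/partial_sbasisP sbA _] | gramA].
  by apply/matrixP => a b; rewrite sform_gram sbA ?in_pairs_n.
split; last by apply/forallP => a; rewrite in_pairs_n.
by apply/partial_sbasisP => a b _ _; rewrite -sform_gram gramA.
Qed.

Lemma sympJ_invariant_unitmx A : A *m J *m A^T = J -> A \in unitmx.
Proof.
move=> gramA; rewrite -row_free_unit -kermx_eq0; apply/eqP.
apply: contraTeq isT => /rowV0Pn[v /sub_kermxP vA nz_v].
have [y] := sform_nondeg nz_v.
by rewrite /sform -gramA !mulmxA vA !mul0mx mxE eqxx.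
Qed.

Lemma card_Sp : #|Sp n r| = #|partial_sbases n|.
Proof.
rewrite partial_sbases_n -(card_imset _ val_inj); apply: eq_card => A.
apply/imsetP/idP => [[g] | ]; first by rewrite !inE => gJ ->.
rewrite inE => /eqP gramA; have unitA := sympJ_invariant_unitmx gramA.
by exists (Sub A unitA : {'GL_(2 * n)['F_r]}); rewrite ?inE SubK ?gramA.
Qed.

End Symplectic.

Lemma dvdn_expn_sub1 r a b : 0 < r -> r ^ a - 1 %| r ^ (a * b) - 1.
Proof.
move=> r_gt0; elim: b => [|b IHb]; first by rewrite muln0 subnn dvdn0.
have ra_gt0 : 0 < r ^ a by rewrite expn_gt0 r_gt0.
have rab_gt0 : 0 < r ^ (a * b) by rewrite expn_gt0 r_gt0.
have -> : r ^ (a * b.+1) - 1 = r ^ a * (r ^ (a * b) - 1) + (r ^ a - 1).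
  by rewrite mulnS expnD; nia.
by rewrite dvdn_add ?dvdn_mull.
Qed.

Lemma lcm_iota_gt0 n : 0 < \big[lcmn/1]_(1 <= i < n.+1) i.
Proof.
by elim: n => [|n IHn]; [rewrite big_geq | rewrite big_nat_recr //= lcmn_gt0 IHn].
Qed.

Lemma dvdn_lcm_iota n k : 0 < k <= n -> k %| \big[lcmn/1]_(1 <= i < n.+1) i.
Proof.
elim: n => [|n IHn] kn; first by lia.
rewrite big_nat_recr //=; have [->|ne_kn] := eqVneq k n.+1; first exact: dvdn_lcmr.
by rewrite (dvdn_trans _ (dvdn_lcml _ _)) // IHn; lia.
Qed.

Lemma Omega_expn_sub1_nbar r n k : prime r -> 0 < k <= n ->
  Omega (r ^ (2 * k) - 1) <= Omega (r ^ nbar n - 1).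
Proof.
move=> r_pr kn; have r_gt1 := prime_gt1 r_pr.
apply: dvdn_leq_Omega.
  by rewrite subn_gt0 -{1}(expn0 r) ltn_exp2l // muln_gt0 lcm_iota_gt0.
have /dvdnP[t def_lcm] := dvdn_lcm_iota kn.
by rewrite /nbar def_lcm [t * k]mulnC mulnA dvdn_expn_sub1 ?prime_gt0.
Qed.

Lemma sum_odd n : \sum_(i < n) (2 * (n - i)).-1 = n ^ 2.
Proof.
elim: n => [|n IHn]; first by rewrite big_ord0.
rewrite big_ord_recl /= subn0 (eq_bigr (fun i : 'I_n => (2 * (n - i)).-1)).
  by rewrite IHn; lia.
by move=> i _; rewrite /bump /=; congr _.-1; lia.
Qed.

Lemma Omega_card_Sp n r M : 0 < n -> prime r -> odd r ->
  Omega (r ^ nbar n - 1) <= M -> Omega #|Sp n r| <= n ^ 2 + n * M.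
Proof.
move=> n_gt0 r_pr r_odd OmM; have r_gt1 := prime_gt1 r_pr.
have pow_gt1 k : 0 < k -> 1 < r ^ k.
  by move=> k_gt0; rewrite -{1}(expn0 r) ltn_exp2l.
rewrite card_Sp // card_partial_sbases // Omega_prod => [|i _]; last first.
  have k_gt0 : 0 < 2 * (n - i) by have := ltn_ord i; lia.
  by rewrite muln_gt0 subn_gt0 pow_gt1 // expn_gt0 prime_gt0.
have -> : n * M = \sum_(i < n) M by rewrite sum_nat_const card_ord.
rewrite -sum_odd -big_split leq_sum // => i _.
have k_gt0 : 0 < 2 * (n - i) by have := ltn_ord i; lia.
rewrite OmegaM ?Omega_pfactor ?subn_gt0 ?pow_gt1 ?expn_gt0 ?(prime_gt0 r_pr) //.
rewrite addnC leq_add2l (leq_trans _ OmM) // Omega_expn_sub1_nbar //.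
by have := ltn_ord i; lia.
Qed.

Lemma Sp_group_set n r : group_set (Sp n r).
Proof.
apply/group_setP; split=> [|x y]; first by rewrite inE GL_1E trmx1 mul1mx mulmx1.
rewrite !inE GL_MxE trmx_mul => /eqP xJ /eqP yJ; set gx := GLval x; set gy := GLval y.
have -> : (gx *m gy *m sympJ n r *m (gy^T *m gx^T) = gx *m (gy *m sympJ n r *m gy^T) *m gx^T)%R.
  by rewrite !mulmxA.
by rewrite yJ xJ.
Qed.

Canonical Sp_group n r := group (Sp_group_set n r).

Lemma c_dim_leW (gT : finGroupType) (G : {set gT}) B B' :
  c_dim_le G B -> B <= B' -> c_dim_le G B'.
Proof. by move=> leGB leBB' k Y /leGB/leq_trans->. Qed.

Unset Implicit Arguments.
Theorem theorem3 (n M r p : nat) (gT : finGroupType)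
    (G V X R A : {group gT}) :
  0 < n ->
  is_M_bar (nbar n) M ->
  r \in pi_set (nbar n) M ->
  (* R = R_{n,r}: extraspecial of order r^(2n+1) and exponent r *)
  extraspecial R -> #|R| = r ^ (2 * n + 1) -> exponent R = r ->
  (* X = R A, with A acting faithfully on R (A <= Aut R), A ~ Sp_{2n}(r),
     A centralizing Z(R) *)
  (R ><| A = X)%g -> ('C_A(R) = 1)%g -> (A \subset 'C('Z(R)))%g ->
  A \isog Sp n r ->
  (* p prime, p = 1 mod r *)
  prime p -> p = 1 %[mod r] ->
  (* V: faithful irreducible F_p X-module of dimension r^n, G = V X *)
  (p.-abelem V)%g -> logn p #|V| = r ^ n ->
  (V ><| X = G)%g -> ('C_X(V) = 1)%g -> acts_irreducibly X V 'J%gact ->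
  c_dim_le G (2 * ((n + 1) ^ 2 + n * M)).
Proof.
move=> n_gt0 _ r_pi _ cardR _ defX _ _ isoA _ _ abelV _ defG _ _.
have /and3P[r_odd r_pr OmM] : [&& odd r, prime r & Omega (r ^ nbar n - 1) <= M] := r_pi.
have [nsVG _ _ _ _] := sdprod_context defG.
apply: c_dim_leW (c_dim_le_abelian_normal nsVG (abelem_abelian abelV)) _.
rewrite leq_mul2l /= -(card_isog (sdprod_isog defG)) -(sdprod_card defX).
rewrite OmegaM ?cardG_gt0 // cardR Omega_pfactor // (card_isog isoA).
have OmSp : Omega #|Sp_group n r| <= n ^ 2 + n * M := Omega_card_Sp n_gt0 r_pr r_odd OmM.
by lia.
Qed.
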